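(* Assume the setting of the context. Then for all sufficiently small $\epsilon>0$ and every $\sigma\in\Sigma$ (writing $Q=Q^\epsilon_\sigma$, $D=D_{\kappa_\sigma}$), for $x\in\mathbb{R}\cup\{\infty\}$: (i) if $x\notin[0,\infty)$ then $Q\cdot(D\cdot x)\notin[\widetilde{x}_-,\infty)$; (ii) if $x\notin[\widetilde{x}_-,\infty)$ then $Q\cdot(D\cdot x)\notin[\widetilde{x}_c,\infty)$; (iii) if $Q\cdot(D\cdot x)\notin[0,\infty)$ then $x\notin[0,\widetilde{x}_+)$.
   Context: Let $(\Sigma,\mathbf{p})$ be a probability space. For each $\sigma\in\Sigma$ and $\epsilon\in[-1,1]$ let real numbers $a_\sigma,b_\sigma$, $\kappa_\sigma>0$ and $\alpha^\epsilon_\sigma,\beta^\epsilon_\sigma,\gamma^\epsilon_\sigma,\delta^\epsilon_\sigma$ be given, with $A^\epsilon_\sigma=\begin{pmatrix}\alpha^\epsilon_\sigma&\beta^\epsilon_\sigma\\ \gamma^\epsilon_\sigma&\delta^\epsilon_\sigma\end{pmatrix}$. Assume that for all $\sigma$: $|\log(\kappa_\sigma)|\le C_0$, $a_\sigma-|b_\sigma|\ge C_1$, $a_\sigma+|b_\sigma|\le C_2$, and $\|A^\epsilon_\sigma\|\le C_3$ for $|\epsilon|\le1$, with constants $C_0,C_1,C_2,C_3\in(0,\infty)$. On $\mathbb{R}\cup\{\infty\}$ define $D_{\kappa}\cdot x=\kappa^2x$ and $$Q^\epsilon_\sigma\cdot x=\frac{(1+\epsilon^2\alpha^\epsilon_\sigma)x+(a_\sigma-b_\sigma-\epsilon\beta^\epsilon_\sigma)\epsilon}{1+\epsilon^2\delta^\epsilon_\sigma-(a_\sigma+b_\sigma+\epsilon\gamma^\epsilon_\sigma)\epsilon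 x}.$$ Let $\lambda=\lambda(\epsilon)>0$ be a function of $\epsilon>0$ with $\lim_{\epsilon\to0}\lambda=0$ and $\lim_{\epsilon\to0}\frac{\log(\lambda)}{\log(\epsilon)}=0$, and set $\Lambda=e^{2C_0\lambda}$. Put $A=\Lambda(C_2+C_3\epsilon)\epsilon$, $B=\Lambda-1-C_3\epsilon^2(\Lambda+1)$, $C=(C_2+C_3\epsilon)\epsilon$, and $$\widetilde{x}_-=e^{2C_0}\frac{(B^2+4AC)\,C}{B^3},\qquad \widetilde{x}_+=e^{-2C_0}\frac{B^2-2AC}{AB},\qquad \widetilde{x}_c=e^{2C_0}\Lambda\,\widetilde{x}_-.$$ *)

From Stdlib Require Import Reals.
From Coquelicot Require Import Coquelicot.
Open Scope R_scope.

(* The real projective line R ∪ {∞}: [Some y] is the real y, [None] is ∞. *)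
Definition projR := option R.

Definition in_Ici (a : R) (x : projR) : Prop :=
  match x with Some y => a <= y | None => False end.

Definition in_Ico (a b : R) (x : projR) : Prop :=
  match x with Some y => a <= y < b | None => False end.

Definition mobius (p q r s : R) (x : projR) : projR :=
  match x with
  | Some y => if Req_EM_T (r * y + s) 0 then None else Some ((p * y + q) / (r * y + s))
  | None => if Req_EM_T r 0 then None else Some (p / r)
  end.

Definition Dact (kappa : R) (x : projR) : projR :=
  match x with Some y => Some (kappa ^ 2 * y) | None => None end.

Definition Qact (eps a b alpha beta gamma delta : R) (x : projR) : projR :=
  mobius (1 + eps ^ 2 * alpha) ((a - b - eps * beta) * eps)
         (- ((a + b + eps * gamma) * eps)) (1 + eps ^ 2 * delta) x.

(* Operator (spectral) norm of the 2x2 matrix [[α, β], [γ, δ]]: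
   square root of the largest eigenvalue of A^T A. *)
Definition opnorm2 (alpha beta gamma delta : R) : R :=
  let s := alpha ^ 2 + beta ^ 2 + gamma ^ 2 + delta ^ 2 in
  let d := alpha * delta - beta * gamma in
  sqrt ((s + sqrt (s ^ 2 - 4 * d ^ 2)) / 2).

Definition bigLambda (C0 lam : R) : R := exp (2 * C0 * lam).
Definition qA (C0 C2 C3 lam eps : R) : R := bigLambda C0 lam * (C2 + C3 * eps) * eps.
Definition qB (C0 C3 lam eps : R) : R :=
  bigLambda C0 lam - 1 - C3 * eps ^ 2 * (bigLambda C0 lam + 1).
Definition qC (C2 C3 eps : R) : R := (C2 + C3 * eps) * eps.

Definition xt_minus (C0 C2 C3 lam eps : R) : R :=
  let A := qA C0 C2 C3 lam eps in
  let B := qB C0 C3 lam eps in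
  let C := qC C2 C3 eps in
  exp (2 * C0) * ((B ^ 2 + 4 * A * C) * C) / B ^ 3.
Definition xt_plus (C0 C2 C3 lam eps : R) : R :=
  let A := qA C0 C2 C3 lam eps in
  let B := qB C0 C3 lam eps in
  let C := qC C2 C3 eps in
  exp (- (2 * C0)) * (B ^ 2 - 2 * A * C) / (A * B).
Definition xt_c (C0 C2 C3 lam eps : R) : R :=
  exp (2 * C0) * bigLambda C0 lam * xt_minus C0 C2 C3 lam eps.

(* On the half-line where its denominator is positive, Q is an increasing
   homography (p, q > 0 > r and s > 0 make its determinant positive), and D only
   rescales by kappa^2 <= e^(2 C0).  Each claim therefore reduces to one
   evaluation at an endpoint: Q(0) = q/s <= C/B <= xt_minus; at
   Y = e^(2 C0) xt_minus one has Q(Y) <= Lambda Y = xt_c because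
   A Y^2 - B Y + C <= 0, which holds once A C / B^2 <= (K - 1) / (2 K^2) with
   K = e^(4 C0); and the denominator stays nonnegative up to e^(2 C0) xt_plus.
   These conditions hold for small eps since B ~ 2 C0 lambda while A C = O(eps^2),
   and ln lambda / ln eps -> 0 gives eps < lambda^2. *)

From Stdlib Require Import Reals Lra Psatz.
From Coquelicot Require Import Coquelicot.
Open Scope R_scope.

Lemma opnorm2_swap_cols alpha beta gamma delta :
  opnorm2 beta alpha delta gamma = opnorm2 alpha beta gamma delta.
Proof.
unfold opnorm2; cbv zeta.
replace (beta ^ 2 + alpha ^ 2 + delta ^ 2 + gamma ^ 2)
  with (alpha ^ 2 + beta ^ 2 + gamma ^ 2 + delta ^ 2) by ring.
replace ((beta * gamma - alpha * delta) ^ 2)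
  with ((alpha * delta - beta * gamma) ^ 2) by ring.
reflexivity.
Qed.

Lemma opnorm2_swap_rows alpha beta gamma delta :
  opnorm2 gamma delta alpha beta = opnorm2 alpha beta gamma delta.
Proof.
unfold opnorm2; cbv zeta.
replace (gamma ^ 2 + delta ^ 2 + alpha ^ 2 + beta ^ 2)
  with (alpha ^ 2 + beta ^ 2 + gamma ^ 2 + delta ^ 2) by ring.
replace ((gamma * beta - delta * alpha) ^ 2)
  with ((alpha * delta - beta * gamma) ^ 2) by ring.
reflexivity.
Qed.

Lemma Rabs_le_opnorm2 alpha beta gamma delta :
  Rabs alpha <= opnorm2 alpha beta gamma delta.
Proof.
unfold opnorm2.
set (S := alpha ^ 2 + beta ^ 2 + gamma ^ 2 + delta ^ 2).
set (d := alpha * delta - beta * gamma).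
rewrite <- (sqrt_pow2 (Rabs alpha)) by apply Rabs_pos; rewrite pow2_abs.
apply sqrt_le_1_alt.
assert (hsqrt := sqrt_pos (S ^ 2 - 4 * d ^ 2)).
destruct (Rle_or_lt (2 * alpha ^ 2 - S) 0) as [Hle | Hgt]; [lra |].
(* When alpha^2 dominates the other squares, Cauchy-Schwarz gives d^2 <= alpha^2 (S - alpha^2). *)
assert (hd : d ^ 2 <= alpha ^ 2 * (S - alpha ^ 2)).
{ unfold S in *; unfold d.
  assert (0 <= (alpha * gamma + beta * delta) ^ 2) by apply pow2_ge_0.
  assert (0 <= beta ^ 2 * (alpha ^ 2 - gamma ^ 2 - delta ^ 2))
    by (apply Rmult_le_pos; [apply pow2_ge_0 | nra]).
  nra. }
assert (h : sqrt ((2 * alpha ^ 2 - S) ^ 2) <= sqrt (S ^ 2 - 4 * d ^ 2))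
  by (apply sqrt_le_1_alt; nra).
rewrite sqrt_pow2 in h; lra.
Qed.

Lemma Rabs_entries_le_of_opnorm2_le alpha beta gamma delta C3 :
  opnorm2 alpha beta gamma delta <= C3 ->
  Rabs alpha <= C3 /\ Rabs beta <= C3 /\ Rabs gamma <= C3 /\ Rabs delta <= C3.
Proof.
intros hnorm; repeat split; eapply Rle_trans; try apply hnorm; [| rewrite <- opnorm2_swap_cols
  | rewrite <- opnorm2_swap_rows | rewrite <- opnorm2_swap_rows, <- opnorm2_swap_cols];
  apply Rabs_le_opnorm2.
Qed.

Section MobiusPositive.

Variables p q r s : R.
Hypotheses (hp : 0 < p) (hq : 0 < q) (hr : r < 0) (hs : 0 < s).

Lemma homography_lt y1 y2 :
  y1 < y2 -> 0 < r * y2 + s -> (p * y1 + q) / (r * y1 + s) < (p * y2 + q) / (r * y2 + s).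
Proof.
intros hy h2.
assert (h1 : 0 < r * y1 + s) by nra.
apply Rlt_0_minus.
replace ((p * y2 + q) / (r * y2 + s) - (p * y1 + q) / (r * y1 + s))
  with ((p * s - q * r) * (y2 - y1) / ((r * y1 + s) * (r * y2 + s))) by (field; lra).
assert (0 < p * s - q * r) by nra.
apply Rdiv_lt_0_compat; apply Rmult_lt_0_compat; lra.
Qed.

Lemma mobius_notin_Ici (Y M : R) (x : projR) :
  0 <= Y -> 0 < r * Y + s -> (p * Y + q) / (r * Y + s) <= M ->
  ~ in_Ici Y x -> ~ in_Ici M (mobius p q r s x).
Proof.
intros hY hden hM hx.
assert (hM0 : 0 < M).
{ apply Rlt_le_trans with (2 := hM); apply Rdiv_lt_0_compat; nra. }
destruct x as [y |]; simpl.
- assert (hy : y < Y) by (simpl in hx; lra).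
  destruct (Req_EM_T (r * y + s) 0) as [_ | _]; simpl; [easy |].
  pose proof (homography_lt y Y hy hden); lra.
- destruct (Req_EM_T r 0) as [_ | _]; simpl; [easy |].
  assert (0 < p / - r) by (apply Rdiv_lt_0_compat; lra).
  replace (p / r) with (- (p / - r)) by (field; lra); lra.
Qed.

Lemma mobius_in_Ici_0 (Z : R) (x : projR) :
  0 <= r * Z + s -> in_Ico 0 Z x -> in_Ici 0 (mobius p q r s x).
Proof.
intros hden hx.
destruct x as [y |]; simpl in *; [| easy].
assert (hy : 0 < r * y + s) by nra.
destruct (Req_EM_T (r * y + s) 0) as [hz | _]; simpl; [lra |].
apply Rlt_le, Rdiv_lt_0_compat; nra.
Qed.

End MobiusPositive.

Lemma Dact_notin_Ici (kappa K X : R) (x : projR) :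
  0 < kappa -> kappa ^ 2 <= K -> 0 <= X -> ~ in_Ici X x -> ~ in_Ici (K * X) (Dact kappa x).
Proof.
intros hk hK hX hx; destruct x as [y |]; simpl in *; [| easy].
assert (0 < kappa ^ 2) by nra.
destruct (Rlt_or_le y 0); nra.
Qed.

Lemma Dact_in_Ico (kappa K X : R) (x : projR) :
  0 < kappa -> kappa ^ 2 <= K -> in_Ico 0 X x -> in_Ico 0 (K * X) (Dact kappa x).
Proof.
intros hk hK hx; destruct x as [y |]; simpl in *; [| easy].
assert (0 < kappa ^ 2) by nra.
split; nra.
Qed.

Lemma mobius_le_mul_of_quadratic (p q r s c C L Y : R) :
  0 <= L -> 0 < Y -> 0 < p -> 0 < q ->
  p <= 1 + c -> q <= C -> 1 - c <= s -> - C <= r ->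
  L * C * Y ^ 2 - (L - 1 - c * (L + 1)) * Y + C <= 0 ->
  0 < r * Y + s /\ (p * Y + q) / (r * Y + s) <= L * Y.
Proof.
intros hL hY hp hq hp1 hqC hs1 hrC hquad.
(* The quadratic is exactly the worst case of L Y (r Y + s) - (p Y + q) over the coefficient box. *)
assert (hkey : p * Y + q <= L * Y * (r * Y + s)).
{ assert (L * Y * (r * Y + s) >= L * Y * (- C * Y + (1 - c))).
  { apply Rle_ge, Rmult_le_compat_l; nra. }
  nra. }
assert (hden : 0 < r * Y + s).
{ destruct (Rle_or_lt (r * Y + s) 0) as [h |]; [| easy].
  assert (L * Y * (r * Y + s) <= 0) by (apply Rmult_le_0_l; nra). nra. }
split; [exact hden |].
apply Rmult_le_reg_r with (r * Y + s); [exact hden |].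
unfold Rdiv; rewrite Rmult_assoc, Rinv_l by lra; lra.
Qed.

Lemma cubic_nonpos (K t : R) :
  1 <= K -> 0 <= t -> 2 * K ^ 2 * t <= K - 1 ->
  K ^ 2 * t * (1 + 4 * t) ^ 2 - K * (1 + 4 * t) + 1 <= 0.
Proof.
intros hK ht hKt.
assert (ht8 : 8 * t <= 1).
{ assert (0 <= (K - 2) ^ 2) by apply pow2_ge_0.
  assert (hK2 : 1 <= K ^ 2) by nra.
  assert (K ^ 2 * (1 - 8 * t) >= 0) by nra.
  destruct (Rle_or_lt (8 * t) 1); [easy | nra]. }
assert (K ^ 2 * t * (1 + 4 * t) ^ 2 <= (K - 1) * (1 + 4 * t)).
{ assert (0 <= K ^ 2 * t) by nra. nra. }
nra.
Qed.

Lemma quadratic_nonpos_at_xt (A B C K0 : R) :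
  1 <= K0 -> 0 < B -> 0 < C -> 0 <= A ->
  2 * K0 ^ 4 * A * C <= (K0 ^ 2 - 1) * B ^ 2 ->
  let Y := K0 * (K0 * ((B ^ 2 + 4 * A * C) * C) / B ^ 3) in
  A * Y ^ 2 - B * Y + C <= 0.
Proof.
intros hK0 hB hC hA hAC Y.
set (t := A * C / B ^ 2).
assert (hY : A * Y ^ 2 - B * Y + C
             = C * ((K0 ^ 2) ^ 2 * t * (1 + 4 * t) ^ 2 - K0 ^ 2 * (1 + 4 * t) + 1))
  by (unfold Y, t; field; lra).
assert (ht : 2 * (K0 ^ 2) ^ 2 * t <= K0 ^ 2 - 1).
{ unfold t; apply Rmult_le_reg_r with (B ^ 2); [nra |].
  replace (2 * (K0 ^ 2) ^ 2 * (A * C / B ^ 2) * B ^ 2) with (2 * K0 ^ 4 * A * C)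
    by (field; lra).
  lra. }
assert (0 <= t) by (unfold t; apply Rmult_le_pos; [nra | apply Rlt_le, Rinv_0_lt_compat; nra]).
rewrite hY.
apply Rmult_le_0_l; [lra |].
apply cubic_nonpos; nra.
Qed.

Lemma exp_le_exp x y : x <= y -> exp x <= exp y.
Proof. intros [h | ->]; [apply Rlt_le, exp_increasing, h | apply Rle_refl]. Qed.

Lemma sq_le_exp_of_Rabs_ln_le (kappa C0 : R) :
  0 < kappa -> Rabs (ln kappa) <= C0 -> kappa ^ 2 <= exp (2 * C0).
Proof.
intros hk hln.
replace (kappa ^ 2) with (exp (ln kappa + ln kappa))
  by (rewrite exp_plus, exp_ln by exact hk; ring).
apply exp_le_exp; pose proof (Rle_abs (ln kappa)); lra.
Qed.

Lemma perturbed_one_bounds (e w C3 : R) :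
  Rabs w <= C3 -> 1 - C3 * e ^ 2 <= 1 + e ^ 2 * w <= 1 + C3 * e ^ 2.
Proof.
intros hw; pose proof (pow2_ge_0 e).
assert (- C3 <= w <= C3) by (apply Rabs_le_between; exact hw).
split; nra.
Qed.

Lemma perturbed_rate_bounds (e u w C1 C2 C3 : R) :
  0 < e -> C3 * e < C1 -> C1 <= u <= C2 -> Rabs w <= C3 ->
  0 < (u + e * w) * e <= (C2 + C3 * e) * e.
Proof.
intros he heC hu hw.
assert (- C3 <= w <= C3) by (apply Rabs_le_between; exact hw).
split; nra.
Qed.

Lemma Qact_coefficient_bounds (e a b alpha beta gamma delta C1 C2 C3 : R) :
  0 < e -> C3 * e < C1 -> a - Rabs b >= C1 -> a + Rabs b <= C2 ->
  Rabs alpha <= C3 -> Rabs beta <= C3 -> Rabs gamma <= C3 -> Rabs delta <= C3 ->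
  (1 - C3 * e ^ 2 <= 1 + e ^ 2 * alpha <= 1 + C3 * e ^ 2) /\
  (0 < (a - b - e * beta) * e <= qC C2 C3 e) /\
  (0 < - - ((a + b + e * gamma) * e) <= qC C2 C3 e) /\
  (1 - C3 * e ^ 2 <= 1 + e ^ 2 * delta <= 1 + C3 * e ^ 2).
Proof.
intros he heC hab1 hab2 halpha hbeta hgamma hdelta.
assert (hb : - Rabs b <= b <= Rabs b) by (apply Rabs_le_between, Rle_refl).
split; [| split; [| split]]; try (apply perturbed_one_bounds; assumption).
- replace (a - b - e * beta) with (a - b + e * - beta) by ring.
  apply perturbed_rate_bounds with C1; [lra | lra | lra | rewrite Rabs_Ropp; lra].
- rewrite Ropp_involutive; apply perturbed_rate_bounds with C1; lra.
Qed.

Section SmallScale.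

Variables C0 C1 C2 C3 e l : R.
Hypotheses (hC0 : 0 < C0) (hC2 : 0 < C2) (hC3 : 0 < C3).
Hypotheses (he : 0 < e) (hl : 0 < l) (hel : e < l ^ 2) (hl1 : l <= 1).
Hypotheses (hl_ln2 : 2 * C0 * l <= ln 2) (hl_C0 : 3 * C3 * l <= C0)
  (hl_K0 : 4 * exp (2 * C0) ^ 4 * (C2 + C3) ^ 2 * l <= (exp (2 * C0) ^ 2 - 1) * C0 ^ 2)
  (hl_C1 : C3 * l < C1).

Lemma eps_le_lam : e <= l.
Proof. nra. Qed.

Lemma qA_eq : qA C0 C2 C3 l e = bigLambda C0 l * qC C2 C3 e.
Proof. unfold qA, qC; ring. Qed.

Lemma qC_pos : 0 < qC C2 C3 e.
Proof. unfold qC; nra. Qed.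

Lemma bigLambda_bounds : 1 + 2 * C0 * l <= bigLambda C0 l <= 2.
Proof.
unfold bigLambda; split; [apply exp_ineq1_le |].
apply Rle_trans with (exp (ln 2)); [apply exp_le_exp; lra | rewrite exp_ln; lra].
Qed.

Lemma qB_ge : C0 * l <= qB C0 C3 l e.
Proof.
pose proof bigLambda_bounds; pose proof eps_le_lam.
assert (hc : C3 * e ^ 2 <= C3 * l ^ 2) by (apply Rmult_le_compat_l; nra).
assert (3 * C3 * l ^ 2 <= C0 * l) by (replace (3 * C3 * l ^ 2) with (3 * C3 * l * l) by ring; nra).
assert (C3 * e ^ 2 * (bigLambda C0 l + 1) <= C3 * e ^ 2 * 3)
  by (apply Rmult_le_compat_l; [pose proof (pow2_ge_0 e); nra | lra]).
unfold qB; lra.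
Qed.

Lemma qB_pos : 0 < qB C0 C3 l e.
Proof. pose proof qB_ge; nra. Qed.

Lemma qB_le : qB C0 C3 l e <= 1 - C3 * e ^ 2.
Proof.
pose proof bigLambda_bounds.
assert (0 <= C3 * e ^ 2 * bigLambda C0 l)
  by (apply Rmult_le_pos; [pose proof (pow2_ge_0 e); nra | nra]).
unfold qB; lra.
Qed.

Lemma qA_qC_le :
  2 * exp (2 * C0) ^ 4 * qA C0 C2 C3 l e * qC C2 C3 e
  <= (exp (2 * C0) ^ 2 - 1) * qB C0 C3 l e ^ 2.
Proof.
pose proof bigLambda_bounds; pose proof eps_le_lam; pose proof qB_ge.
set (K4 := exp (2 * C0) ^ 4); set (L := bigLambda C0 l).
assert (hL : 1 <= L <= 2) by (unfold L; nra).
assert (hK4 : 0 <= K4) by (unfold K4; apply pow_le, Rlt_le, exp_pos).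
assert (hC : 0 <= qC C2 C3 e <= (C2 + C3) * l ^ 2).
{ assert (C3 * e <= C3) by nra.
  assert ((C2 + C3 * e) * e <= (C2 + C3) * e) by (apply Rmult_le_compat_r; lra).
  assert ((C2 + C3) * e <= (C2 + C3) * l ^ 2) by (apply Rmult_le_compat_l; lra).
  unfold qC; split; nra. }
assert (hAC : qA C0 C2 C3 l e * qC C2 C3 e = L * qC C2 C3 e ^ 2) by (rewrite qA_eq; unfold L; ring).
assert (hC_sq : qC C2 C3 e ^ 2 <= (C2 + C3) ^ 2 * l ^ 4)
  by (replace (l ^ 4) with ((l ^ 2) ^ 2) by ring; rewrite <- Rpow_mult_distr; apply pow_incr; lra).
assert (hl3 : 0 <= l ^ 3) by (apply pow_le; lra).
assert (hbound : 4 * K4 * (C2 + C3) ^ 2 * l ^ 4 <= (exp (2 * C0) ^ 2 - 1) * C0 ^ 2 * l ^ 2).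
{ replace (4 * K4 * (C2 + C3) ^ 2 * l ^ 4) with (4 * K4 * (C2 + C3) ^ 2 * l * l ^ 3) by ring.
  apply Rle_trans with ((exp (2 * C0) ^ 2 - 1) * C0 ^ 2 * l ^ 3);
    [apply Rmult_le_compat_r; assumption |].
  apply Rmult_le_compat_l; [| nra].
  apply Rle_trans with (2 := hl_K0); apply Rmult_le_pos; [nra | lra]. }
assert (hB2 : (C0 * l) ^ 2 <= qB C0 C3 l e ^ 2) by (apply pow_incr; nra).
assert (0 <= exp (2 * C0) ^ 2 - 1).
{ pose proof (exp_ineq1_le (2 * C0)). nra. }
rewrite Rmult_assoc, hAC.
apply Rle_trans with (4 * K4 * (C2 + C3) ^ 2 * l ^ 4).
{ assert (L * qC C2 C3 e ^ 2 <= 2 * ((C2 + C3) ^ 2 * l ^ 4))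
    by (apply Rmult_le_compat; try apply pow2_ge_0; lra).
  nra. }
apply Rle_trans with (1 := hbound).
replace ((exp (2 * C0) ^ 2 - 1) * C0 ^ 2 * l ^ 2)
  with ((exp (2 * C0) ^ 2 - 1) * (C0 * l) ^ 2) by ring.
apply Rmult_le_compat_l; assumption.
Qed.

Lemma qC_div_qB_le_xt_minus : qC C2 C3 e / qB C0 C3 l e <= xt_minus C0 C2 C3 l e.
Proof.
pose proof bigLambda_bounds; pose proof qB_pos; pose proof qC_pos.
assert (hK0 : 1 <= exp (2 * C0)) by (pose proof (exp_ineq1_le (2 * C0)); lra).
unfold xt_minus; cbv zeta; rewrite qA_eq.
set (L := bigLambda C0 l) in *; set (B := qB C0 C3 l e) in *; set (C := qC C2 C3 e) in *.
assert (hL : 1 <= L) by nra.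
replace (exp (2 * C0) * ((B ^ 2 + 4 * (L * C) * C) * C) / B ^ 3)
  with (C / B * (exp (2 * C0) * (1 + 4 * (L * C * C / B ^ 2)))) by (field; lra).
rewrite <- (Rmult_1_r (C / B)) at 1.
apply Rmult_le_compat_l; [apply Rlt_le, Rdiv_lt_0_compat; lra |].
assert (0 <= L * C * C / B ^ 2)
  by (apply Rmult_le_pos; [nra | apply Rlt_le, Rinv_0_lt_compat; nra]).
nra.
Qed.

Lemma denominator_nonneg_at_scaled_xt_plus (r s : R) :
  0 < - r <= qC C2 C3 e -> 1 - C3 * e ^ 2 <= s ->
  0 <= r * (exp (2 * C0) * xt_plus C0 C2 C3 l e) + s.
Proof.
intros hr hs.
pose proof bigLambda_bounds; pose proof qB_pos; pose proof qC_pos; pose proof qB_le.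
set (L := bigLambda C0 l) in *; set (B := qB C0 C3 l e) in *; set (C := qC C2 C3 e) in *.
assert (hL : 1 <= L) by nra.
set (Z := exp (2 * C0) * xt_plus C0 C2 C3 l e).
assert (hZ : C * Z = B / L - 2 * (C * C / B)).
{ unfold Z, xt_plus; fold B C; rewrite qA_eq; fold L C; rewrite exp_Ropp.
  field; repeat split; apply Rgt_not_eq; first [apply exp_pos | nra]. }
assert (hCZ : C * Z <= B / L).
{ assert (0 <= C * C / B) by (apply Rmult_le_pos; [nra | apply Rlt_le, Rinv_0_lt_compat; lra]).
  lra. }
assert (hBL : B / L <= 1 - C3 * e ^ 2).
{ apply Rmult_le_reg_r with L; [lra |].
  unfold Rdiv; rewrite Rmult_assoc, Rinv_l by lra.
  pose proof (pow2_ge_0 e).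
  unfold B, qB; fold L; nra. }
destruct (Rle_or_lt Z 0); nra.
Qed.

Lemma mobius_at_scaled_xt_minus (p q r s : R) :
  1 - C3 * e ^ 2 <= p <= 1 + C3 * e ^ 2 -> 0 < q <= qC C2 C3 e ->
  0 < - r <= qC C2 C3 e -> 1 - C3 * e ^ 2 <= s ->
  let Y := exp (2 * C0) * xt_minus C0 C2 C3 l e in
  0 < r * Y + s /\ (p * Y + q) / (r * Y + s) <= xt_c C0 C2 C3 l e.
Proof.
intros hp hq hr hs Y.
pose proof bigLambda_bounds; pose proof qB_pos; pose proof qB_le; pose proof qC_pos.
pose proof qC_div_qB_le_xt_minus.
assert (hL : 0 <= bigLambda C0 l) by nra.
assert (hK0 : 1 <= exp (2 * C0)) by (pose proof (exp_ineq1_le (2 * C0)); lra).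
assert (0 < qC C2 C3 e / qB C0 C3 l e) by (apply Rdiv_lt_0_compat; lra).
replace (xt_c C0 C2 C3 l e) with (bigLambda C0 l * Y) by (unfold Y, xt_c; ring).
apply mobius_le_mul_of_quadratic with (C3 * e ^ 2) (qC C2 C3 e); try lra; [unfold Y; nra |].
change (bigLambda C0 l - 1 - C3 * e ^ 2 * (bigLambda C0 l + 1)) with (qB C0 C3 l e).
rewrite <- qA_eq.
apply quadratic_nonpos_at_xt; try lra; [rewrite qA_eq; nra | apply qA_qC_le].
Qed.

Lemma Qact_Dact_bounds (a b kappa alpha beta gamma delta : R) :
  0 < kappa -> Rabs (ln kappa) <= C0 -> a - Rabs b >= C1 -> a + Rabs b <= C2 ->
  opnorm2 alpha beta gamma delta <= C3 ->
  forall x : projR,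
  let Q := Qact e a b alpha beta gamma delta in
  let D := Dact kappa in
  let xm := xt_minus C0 C2 C3 l e in
  let xp := xt_plus C0 C2 C3 l e in
  let xc := xt_c C0 C2 C3 l e in
  (~ in_Ici 0 x -> ~ in_Ici xm (Q (D x))) /\
  (~ in_Ici xm x -> ~ in_Ici xc (Q (D x))) /\
  (~ in_Ici 0 (Q (D x)) -> ~ in_Ico 0 xp x).
Proof.
intros hk hlnk hab1 hab2 hnorm x Q D xm xp xc.
pose proof qB_pos; pose proof qB_le; pose proof qC_div_qB_le_xt_minus.
assert (hkK0 : kappa ^ 2 <= exp (2 * C0)) by (apply sq_le_exp_of_Rabs_ln_le; assumption).
destruct (Rabs_entries_le_of_opnorm2_le _ _ _ _ _ hnorm) as (hal & hbe & hga & hde).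
assert (heC1 : C3 * e < C1) by (pose proof eps_le_lam; nra).
destruct (Qact_coefficient_bounds e a b alpha beta gamma delta C1 C2 C3)
  as (hp & hq & hr & hs); try assumption.
set (p := 1 + e ^ 2 * alpha) in *; set (q := (a - b - e * beta) * e) in *;
  set (r := - ((a + b + e * gamma) * e)) in *; set (s := 1 + e ^ 2 * delta) in *.
change (Q (D x)) with (mobius p q r s (D x)).
split; [| split].
- intros hx.
  pose proof (Dact_notin_Ici kappa _ 0 x hk hkK0 (Rle_refl 0) hx) as hD.
  rewrite Rmult_0_r in hD.
  apply mobius_notin_Ici with (Y := 0); try lra; [| exact hD].
  replace ((p * 0 + q) / (r * 0 + s)) with (q / s) by (field; lra).
  apply Rle_trans with (qC C2 C3 e / s).
  + apply Rmult_le_compat_r; [apply Rlt_le, Rinv_0_lt_compat |]; lra.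
  + apply Rle_trans with (2 := qC_div_qB_le_xt_minus).
    apply Rmult_le_compat_l; [lra | apply Rinv_le_contravar; lra].
- intros hx.
  assert (0 <= xm) by (pose proof qC_pos; apply Rle_trans with (2 := qC_div_qB_le_xt_minus);
    apply Rlt_le, Rdiv_lt_0_compat; lra).
  destruct (mobius_at_scaled_xt_minus p q r s) as [hden himage]; try tauto.
  fold xm xc in hden, himage.
  apply mobius_notin_Ici with (Y := exp (2 * C0) * xm); try lra.
  + apply Rmult_le_pos; [apply Rlt_le, exp_pos | assumption].
  + apply Dact_notin_Ici; assumption.
- intros hQ hx; apply hQ.
  apply mobius_in_Ici_0 with (Z := exp (2 * C0) * xp); try lra.
  + apply denominator_nonneg_at_scaled_xt_plus; tauto.
  + apply Dact_in_Ico; assumption.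
Qed.

End SmallScale.

Lemma at_right_0_interval (P : R -> Prop) :
  at_right 0 P -> exists eps0, 0 < eps0 /\ forall e, 0 < e < eps0 -> P e.
Proof.
intros [del hdel]; exists del; split; [apply cond_pos |].
intros e [he hed]; apply hdel; [| exact he].
change (Rabs (e + - 0) < del); rewrite Ropp_0, Rplus_0_r, Rabs_pos_eq; lra.
Qed.

Lemma at_right_0_gt : at_right 0 (fun e => 0 < e).
Proof. unfold at_right, within; apply filter_forall; intros e he; exact he. Qed.

Lemma at_right_0_lt (m : R) : 0 < m -> at_right 0 (fun e => e < m).
Proof.
intros hm; unfold at_right, within.
apply (filter_imp (fun e => e < m)); [auto | apply (open_lt m 0 hm)].
Qed.

Lemma lt_sq_of_ln_ratio (e l : R) :
  0 < e < 1 -> 0 < l -> ln l / ln e < 1 / 2 -> e < l ^ 2.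
Proof.
intros he hl hratio.
assert (hlne : ln e < 0) by (rewrite <- ln_1; apply ln_increasing; lra).
assert (hln : ln e < 2 * ln l).
{ replace (ln l) with (ln l / ln e * ln e) by (field; lra). nra. }
apply ln_lt_inv; [lra | nra |].
replace (l ^ 2) with (l * l) by ring; rewrite ln_mult by lra; lra.
Qed.

Section SmallLambda.

Variable lam : R -> R.
Hypothesis hlam_pos : forall eps, 0 < eps -> 0 < lam eps.
Hypothesis hlam0 : filterlim lam (at_right 0) (locally 0).
Hypothesis hlamlog : filterlim (fun eps => ln (lam eps) / ln eps) (at_right 0) (locally 0).

Lemma eventually_mul_lam_lt (k m : R) :
  0 < k -> 0 < m -> at_right 0 (fun e => k * lam e < m).
Proof.
intros hk hm.
apply (filter_imp (fun e => lam e < m / k)).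
- intros e he; apply Rmult_lt_reg_r with (/ k); [apply Rinv_0_lt_compat, hk |].
  replace (k * lam e * / k) with (lam e) by (field; lra); exact he.
- apply (hlam0 (fun z => z < m / k)), (open_lt (m / k) 0), Rdiv_lt_0_compat; assumption.
Qed.

Lemma eventually_lt_lam_sq : at_right 0 (fun e => e < lam e ^ 2).
Proof.
assert (hratio : at_right 0 (fun e => ln (lam e) / ln e < 1 / 2))
  by (apply (hlamlog (fun z => z < 1 / 2)), (open_lt (1 / 2) 0); lra).
apply (filter_imp (fun e => (0 < e /\ e < 1) /\ ln (lam e) / ln e < 1 / 2)).
- intros e [he hr]; apply lt_sq_of_ln_ratio; [exact he | apply hlam_pos; lra | exact hr].
- apply filter_and; [apply filter_and; [apply at_right_0_gt | apply at_right_0_lt; lra] | exact hratio].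
Qed.

End SmallLambda.

Theorem lemma7
  (Sigma : Type)
  (a b kappa : Sigma -> R)
  (alpha beta gamma delta : R -> Sigma -> R)
  (C0 C1 C2 C3 : R)
  (hC0 : 0 < C0) (hC1 : 0 < C1) (hC2 : 0 < C2) (hC3 : 0 < C3)
  (hkappa_pos : forall s, 0 < kappa s)
  (hkappa : forall s, Rabs (ln (kappa s)) <= C0)
  (hab1 : forall s, a s - Rabs (b s) >= C1)
  (hab2 : forall s, a s + Rabs (b s) <= C2)
  (hA : forall s eps, Rabs eps <= 1 ->
          opnorm2 (alpha eps s) (beta eps s) (gamma eps s) (delta eps s) <= C3)
  (lam : R -> R)
  (hlam_pos : forall eps, 0 < eps -> 0 < lam eps)
  (hlam0 : filterlim lam (at_right 0) (locally 0))
  (hlamlog : filterlim (fun eps => ln (lam eps) / ln eps) (at_right 0) (locally 0)) :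
  exists eps0, 0 < eps0 /\
    forall eps, 0 < eps < eps0 -> forall (s : Sigma) (x : projR),
      let Q := Qact eps (a s) (b s) (alpha eps s) (beta eps s) (gamma eps s) (delta eps s) in
      let D := Dact (kappa s) in
      let xm := xt_minus C0 C2 C3 (lam eps) eps in
      let xp := xt_plus C0 C2 C3 (lam eps) eps in
      let xc := xt_c C0 C2 C3 (lam eps) eps in
      (~ in_Ici 0 x -> ~ in_Ici xm (Q (D x))) /\
      (~ in_Ici xm x -> ~ in_Ici xc (Q (D x))) /\
      (~ in_Ici 0 (Q (D x)) -> ~ in_Ico 0 xp x).
Proof.
assert (hK0 : 1 + 2 * C0 <= exp (2 * C0)) by apply exp_ineq1_le.
assert (hln2 : 0 < ln 2) by (rewrite <- ln_1; apply ln_increasing; lra).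
assert (0 < 4 * exp (2 * C0) ^ 4 * (C2 + C3) ^ 2)
  by (apply Rmult_lt_0_compat; [apply Rmult_lt_0_compat; [lra | apply pow_lt] | apply pow_lt]; lra).
assert (0 < (exp (2 * C0) ^ 2 - 1) * C0 ^ 2) by (apply Rmult_lt_0_compat; [nra | apply pow_lt; lra]).
assert (hsmall : at_right 0 (fun e =>
  e < lam e ^ 2 /\ 1 * lam e < 1 /\ C3 * lam e < C1 /\ 2 * C0 * lam e < ln 2 /\
  3 * C3 * lam e < C0 /\
  4 * exp (2 * C0) ^ 4 * (C2 + C3) ^ 2 * lam e < (exp (2 * C0) ^ 2 - 1) * C0 ^ 2)).
{ repeat apply filter_and;
    [apply eventually_lt_lam_sq; assumption | apply eventually_mul_lam_lt; assumption || lra ..]. }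
destruct (at_right_0_interval _ hsmall) as [eps0 [heps0 hsmall_eps]].
exists eps0; split; [exact heps0 |].
intros eps heps s x.
destruct (hsmall_eps eps heps) as (hel & hl1 & hl_C1 & hl_ln2 & hl_C0 & hl_K0).
assert (hl : 0 < lam eps) by (apply hlam_pos; lra).
apply (Qact_Dact_bounds C0 C1 C2 C3 eps (lam eps)); try lra;
  [apply hkappa_pos | apply hkappa | apply hab1 | apply hab2 |].
apply hA; rewrite Rabs_pos_eq; nra.
Qed.
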